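(* For every objective $f_j:S_j\to[0,1]$ and every common prior $\mathbb{CP}_j$ on $S_j$, if the $N$ agents all condition on $\mathbb{CP}_j$ and communicate via the spanning-tree protocol, they globally $\langle\varepsilon_j,\delta_j\rangle$-agree (i.e. $\Pr(|E^{i,T}_j-E^{k,T}_j|\le\varepsilon_j)>1-\delta_j$ for all pairs $i,k$) after $O\!\left(N^7/(\delta_j\varepsilon_j)^2\right)$ additional messages.
   Context: Task $j$ has finite state space $S_j$ and objective $f_j$. Agents hold knowledge partitions $\Pi^{i,t}_j$ of $S_j$ (common knowledge initially), refined upon receiving messages; after conditioning on a common prior $\mathbb{CP}_j$, agent $i$'s expectation is $E^{i,t}_j=\mathbb E_{\mathbb{CP}_j}[f_j\mid\Pi^{i,t}_j(s)]$. Spanning-tree protocol: agents communicate over a strongly connected directed graph on $[N]$ using an outward and an inward spanning tree rooted at agent $1$, each of diameter $g_j=O(N)$ (worst-case ring), cycling through their edges so that each block of $O(g_j)$ messages forwards every agent's current expectation to every other agent. *)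

From mathcomp Require Import all_boot all_order all_algebra.
Set Implicit Arguments. Unset Strict Implicit. Unset Printing Implicit Defensive.
Import Order.TTheory GRing.Theory Num.Theory.
Local Open Scope ring_scope.

Section Knowledge.
Variables (R : realFieldType) (S : finType).

(** A knowledge partition is given by its cell function: [Pi s] is the cell
    containing state [s]. *)
Definition is_partition (Pi : S -> {set S}) : Prop :=
  forall s, s \in Pi s /\ (forall s', s' \in Pi s -> Pi s' = Pi s).

Definition is_prior (P : S -> R) : Prop :=
  (forall s, 0 <= P s) /\ \sum_s P s = 1.

(** E[f | Pi(s)] under the prior P (0/0 = 0 on null cells). *)
Definition cond_exp (P f : S -> R) (Pi : S -> {set S}) (s : S) : R :=
  (\sum_(s' in Pi s) P s' * f s') / (\sum_(s' in Pi s) P s').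

Definition prob (P : S -> R) (A : pred S) : R := \sum_(s | A s) P s.

Definition refine (Pi : S -> {set S}) (g : S -> R) : S -> {set S} :=
  fun s => Pi s :&: [set s' | g s' == g s].

Variable A : eqType.

(** Knowledge partitions at time t: at step t the message
    (sched t).1 -> (sched t).2 carries the sender's current expectation,
    and the receiver conditions on it. *)
Fixpoint knowledge (P f : S -> R) (Pi0 : A -> S -> {set S})
    (sched : nat -> A * A) (t : nat) : A -> S -> {set S} :=
  match t with
  | 0 => Pi0
  | t'.+1 =>
      let K := knowledge P f Pi0 sched t' in
      fun i => if i == (sched t').2
               then refine (K i) (cond_exp P f (K (sched t').1))
               else K i
  end.

Definition expectation P f Pi0 sched t (i : A) : S -> R :=
  cond_exp P f (knowledge P f Pi0 sched t i).

End Knowledge.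

Section SpanningTree.
Variable n : nat. (* agents are 'I_n.+1, agent "1" is the root ord0 *)
Local Notation Ag := 'I_n.+1.

Definition depth (p : Ag -> Ag) (v : Ag) : nat :=
  find (fun k => iter k p v == ord0) (iota 0 n.+1).

Definition in_tree (e : rel Ag) (p : Ag -> Ag) : Prop :=
  p ord0 = ord0 /\ forall v, iter n p v = ord0 /\ (v != ord0 -> e v (p v)).

Definition out_tree (e : rel Ag) (p : Ag -> Ag) : Prop :=
  p ord0 = ord0 /\ forall v, iter n p v = ord0 /\ (v != ord0 -> e (p v) v).

Definition nonroot : seq Ag := [seq v <- enum Ag | v != ord0].

(** One block of the spanning-tree protocol: the inward-tree edges from the
    leaves up to the root (decreasing depth), then the outward-tree edges
    from the root down to the leaves (increasing depth). *)
Definition st_block (pin pout : Ag -> Ag) : seq (Ag * Ag) :=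
  [seq (v, pin v) | v <- sort (fun u v => depth pin v <= depth pin u)%N nonroot]
  ++ [seq (pout v, v) | v <- sort (fun u v => depth pout u <= depth pout v)%N nonroot].

Definition st_sched (pin pout : Ag -> Ag) (t : nat) : Ag * Ag :=
  nth (ord0, ord0) (st_block pin pout) (t %% size (st_block pin pout)).

End SpanningTree.

From mathcomp Require Import all_boot all_order all_algebra.
From mathcomp Require Import lra ring zify.
Set Implicit Arguments. Unset Strict Implicit. Unset Printing Implicit Defensive.
Import Order.TTheory GRing.Theory Num.Theory.
Local Open Scope ring_scope.

(* The potential of a knowledge partition G is E[E[f|G]^2]; it lies in [0,1],
   grows under refinement, and when G refines H the mean square distance between
   E[f|G] and E[f|H] is exactly the gain in potential.  Within one round of 2n+1
   blocks the root hears from every agent through [pin], and then every agent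
   hears from the root through [pout]; so at the meeting time of round k the
   potential of every agent, and of every sender it has just heard from, is
   squeezed between the root potentials x_k and x_{k+1}.  Adjacent agents then
   disagree by at most 4 (x_{k+1} - x_k) in mean square, and any two agents by
   16 n^2 (x_{k+1} - x_k).  As x increases within [0,1], one of the first
   32 N^2 / (delta eps^2) rounds has increment at most delta eps^2 / (32 N^2),
   and Chebyshev's inequality concludes.  A round takes O(N^2) messages. *)

Section Potential.
Variables (R : realFieldType) (S : finType) (P f : S -> R).
Hypothesis P_ge0 : forall s, 0 <= P s.

Definition inner (X Y : S -> R) : R := \sum_s P s * X s * Y s.
Definition sqnorm (X : S -> R) : R := inner X X.
Definition cell_const (G : S -> {set S}) (X : S -> R) : Prop :=
  forall s s', s' \in G s -> X s' = X s.
Definition potential (G : S -> {set S}) : R := sqnorm (cond_exp P f G).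

Lemma cell_const_sub (G H : S -> {set S}) X :
  (forall s, G s \subset H s) -> cell_const H X -> cell_const G X.
Proof. by move=> GH HX s s' /(subsetP (GH s)); apply: HX. Qed.

Lemma partition_sym (G : S -> {set S}) :
  is_partition G -> forall s s', (s' \in G s) = (s \in G s').
Proof.
move=> HG s s'; apply/idP/idP => H.
- by have [_ ->] := HG s; [case: (HG s)|].
- by have [_ ->] := HG s'; [case: (HG s')|].
Qed.

Lemma cell_const_cond_exp (G : S -> {set S}) :
  is_partition G -> cell_const G (cond_exp P f G).
Proof. by move=> HG s s' H; rewrite /cond_exp (proj2 (HG s) s' H). Qed.

Lemma inner_cond_exp (G : S -> {set S}) X : is_partition G -> cell_const G X ->
  inner X (cond_exp P f G) = inner X f.
Proof.
move=> HG HX; rewrite /inner /cond_exp.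
transitivity (\sum_s \sum_(s' in G s) P s * X s * (P s' * f s') / (\sum_(t in G s) P t)).
  apply: eq_bigr => s _; rewrite mulrA big_distrr /= mulr_suml.
  by apply: eq_bigr => s' _; rewrite mulrA.
rewrite (exchange_big_dep xpredT) //=; apply: eq_bigr => s' _.
pose Z := \sum_(t in G s') P t.
have ZP s : s \in G s' -> \sum_(t in G s) P t = Z.
  by move=> Hs; rewrite /Z (proj2 (HG s') s Hs).
transitivity (\sum_(s in G s') P s * X s' * (P s' * f s') / Z).
  apply: eq_big => [s|s Hs]; first by rewrite partition_sym.
  have Hs' : s \in G s' by rewrite -partition_sym.
  by rewrite ZP // (HX s' s Hs') mulrA.
rewrite -big_distrl -big_distrl /= -/Z.
have [Z0|Zn0] := eqVneq Z 0; last by rewrite -mulr_suml -/Z; field.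
(* a null cell carries no mass, so both sides vanish *)
suff -> : P s' = 0 by rewrite !(mul0r, mulr0).
apply/eqP; rewrite eq_le P_ge0 andbT -Z0 /Z.
by rewrite (bigD1 s') ?(proj1 (HG s')) //= lerDl sumr_ge0.
Qed.

Lemma sqnorm_ge0 X : 0 <= sqnorm X.
Proof. by apply: sumr_ge0 => s _; rewrite -mulrA mulr_ge0 // -expr2 sqr_ge0. Qed.

Lemma eq_sqnorm X Y : (forall s, X s = Y s) -> sqnorm X = sqnorm Y.
Proof. by move=> XY; apply: eq_bigr => s _; rewrite XY. Qed.

Lemma sqnorm0 : sqnorm (fun=> 0) = 0.
Proof. by rewrite /sqnorm /inner big1 // => s _; rewrite mulr0. Qed.

Lemma sqnorm_weighted_add (k : R) X Y : 0 <= k ->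
  k * sqnorm (fun s => X s + Y s) <= (k + 1) * sqnorm X + k * (k + 1) * sqnorm Y.
Proof.
move=> k_ge0; rewrite /sqnorm /inner !mulr_sumr -big_split /=.
apply: ler_sum => s _; rewrite -subr_ge0.
have -> : (k + 1) * (P s * X s * X s) + k * (k + 1) * (P s * Y s * Y s)
          - k * (P s * (X s + Y s) * (X s + Y s)) = P s * (X s - k * Y s) ^+ 2 by ring.
by rewrite mulr_ge0 ?sqr_ge0.
Qed.

Lemma sqnorm_subC X Y :
  sqnorm (fun s => X s - Y s) = sqnorm (fun s => Y s - X s).
Proof. by apply: eq_bigr => s _; ring. Qed.

Lemma sqnorm_sub_le X Y Z :
  sqnorm (fun s => X s - Z s) <=
  2 * sqnorm (fun s => X s - Y s) + 2 * sqnorm (fun s => Z s - Y s).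
Proof.
have := @sqnorm_weighted_add 1 (fun s => X s - Y s) (fun s => Y s - Z s) ler01.
rewrite (_ : 1 + 1 = 2) // !mul1r (sqnorm_subC Y Z).
by rewrite (@eq_sqnorm _ (fun s => X s - Z s)) // => s; ring.
Qed.

Lemma sqnorm_telescope (X : nat -> S -> R) (c : R) m :
  (forall i, (i < m)%N -> sqnorm (fun s => X i s - X i.+1 s) <= c) ->
  sqnorm (fun s => X 0%N s - X m s) <= m%:R ^+ 2 * c.
Proof.
elim: m => [|m IH] step.
  by rewrite (@eq_sqnorm _ (fun=> 0)) ?sqnorm0 ?expr0n ?mul0r // => s; rewrite subrr.
have IHm := IH (fun i lt_im => step i (leqW lt_im)).
have last_step := step m (ltnSn m).
clear IH step; case: m IHm last_step => [|m] IHm last_step; first by rewrite expr1n mul1r.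
set k : R := m.+1%:R; have k_gt0 : 0 < k by rewrite ltr0n.
have := sqnorm_weighted_add (fun s => X 0%N s - X m.+1 s)
                            (fun s => X m.+1 s - X m.+2 s) (ltW k_gt0).
rewrite (@eq_sqnorm _ (fun s => X 0%N s - X m.+2 s)) => [|s]; last by ring.
move=> weighted; rewrite -(ler_pM2l k_gt0) -natr1 -/k; apply: le_trans weighted _.
have -> : k * ((k + 1) ^+ 2 * c) = (k + 1) * (k ^+ 2 * c) + k * (k + 1) * c by ring.
by apply: lerD; apply: ler_wpM2l => //; rewrite ?mulr_ge0 //; lra.
Qed.

Lemma sqnorm_cond_exp_sub (G H : S -> {set S}) :
  is_partition G -> is_partition H -> cell_const G (cond_exp P f H) ->
  sqnorm (fun s => cond_exp P f G s - cond_exp P f H s) = potential G - potential H.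
Proof.
move=> HG HH HGH.
have cross : inner (cond_exp P f H) (cond_exp P f G) = potential H.
  by rewrite (inner_cond_exp HG HGH) -(inner_cond_exp HH (cell_const_cond_exp HH)).
have expand : sqnorm (fun s => cond_exp P f G s - cond_exp P f H s)
    = potential G - 2 * inner (cond_exp P f H) (cond_exp P f G) + potential H.
  rewrite /potential /sqnorm /inner mulr_sumr -sumrN -!big_split /=.
  by apply: eq_bigr => s _; ring.
by rewrite expand cross; ring.
Qed.

Lemma potential_le_refined (G H : S -> {set S}) :
  is_partition G -> is_partition H -> cell_const G (cond_exp P f H) ->
  potential H <= potential G.
Proof. by move=> HG HH HGH; rewrite -subr_ge0 -sqnorm_cond_exp_sub ?sqnorm_ge0. Qed.

Lemma eq_potential (G H : S -> {set S}) :
  (forall s, G s = H s) -> potential G = potential H.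
Proof. by move=> GH; apply: eq_sqnorm => s; rewrite /cond_exp GH. Qed.

Lemma chebyshev_sqnorm (X : S -> R) (eps : R) : \sum_s P s = 1 -> 0 < eps ->
  1 - sqnorm X / eps ^+ 2 <= prob P (fun s => `|X s| <= eps).
Proof.
move=> P_sum1 eps_gt0; have eps2_gt0 : 0 < eps ^+ 2 by rewrite exprn_gt0.
rewrite /prob -{1}P_sum1 (bigID (fun s => `|X s| <= eps)) /= lerBlDr lerD2l.
rewrite ler_pdivlMr // mulr_suml.
apply: (@le_trans _ _ (\sum_(s | ~~ (`|X s| <= eps)) P s * X s * X s)).
  apply: ler_sum => s; rewrite -ltNge => lt_eps.
  rewrite -mulrA ler_wpM2l // -expr2 -(real_normK (num_real (X s))).
  by rewrite lerXn2r ?nnegrE ?normr_ge0 ?ltW.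
rewrite [X in _ <= X](bigID (fun s => `|X s| <= eps)) /= lerDr.
by apply: sumr_ge0 => s _; rewrite -mulrA mulr_ge0 // -expr2 sqr_ge0.
Qed.

Section UnitInterval.
Hypothesis f01 : forall s, 0 <= f s <= 1.

Lemma cond_exp_in01 (G : S -> {set S}) s : 0 <= cond_exp P f G s <= 1.
Proof.
rewrite /cond_exp; set Z := \sum_(t in G s) P t.
have num_ge0 : 0 <= \sum_(t in G s) P t * f t.
  by apply: sumr_ge0 => t _; rewrite mulr_ge0 //; case/andP: (f01 t).
have num_leZ : \sum_(t in G s) P t * f t <= Z.
  by apply: ler_sum => t _; rewrite ler_piMr //; case/andP: (f01 t).
have [->|Zn0] := eqVneq Z 0; first by rewrite invr0 mulr0 lexx ler01.
have Z_gt0 : 0 < Z by rewrite lt_def Zn0 sumr_ge0.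
by rewrite divr_ge0 ?(ltW Z_gt0) //= ler_pdivrMr // mul1r.
Qed.

Lemma potential_in01 (G : S -> {set S}) : \sum_s P s = 1 -> 0 <= potential G <= 1.
Proof.
move=> P_sum1; rewrite sqnorm_ge0 /= /potential /sqnorm /inner -P_sum1.
apply: ler_sum => s _; rewrite -mulrA ler_piMr //.
by case/andP: (cond_exp_in01 G s) => ge0 le1; rewrite -expr2 expr_le1.
Qed.

End UnitInterval.
End Potential.

Lemma is_partition_refine (R : realFieldType) (S : finType) (G : S -> {set S})
    (g : S -> R) :
  is_partition G -> is_partition (refine G g).
Proof.
move=> HG s; rewrite /refine; split; first by rewrite !inE (proj1 (HG s)) eqxx.
by move=> s'; rewrite !inE => /andP [/(proj2 (HG s)) -> /eqP ->].
Qed.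

Section KnowledgeDynamics.
Variables (R : realFieldType) (S : finType) (P f : S -> R) (A : eqType).
Variables (Pi0 : A -> S -> {set S}) (sched : nat -> A * A).
Hypothesis Pi0_part : forall i, is_partition (Pi0 i).
Hypothesis P_ge0 : forall s, 0 <= P s.

Local Notation K := (knowledge P f Pi0 sched).
Local Notation E := (expectation P f Pi0 sched).

Definition knowledge_potential t i : R := potential P f (K t i).
Local Notation Phi := knowledge_potential.

Lemma is_partition_knowledge t i : is_partition (K t i).
Proof.
elim: t i => [|t IH] i /=; first exact: Pi0_part.
by case: ifP => _; [apply: is_partition_refine | apply: IH].
Qed.

Lemma knowledge_subset t t' i s : (t <= t')%N -> K t' i s \subset K t i s.
Proof.
move=> /subnK <-; elim: (t' - t)%N => [|d IH] //=.
apply: subset_trans IH; case: ifP => _ //; exact: subsetIl.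
Qed.

Lemma cell_const_expectation_later t t' i : (t <= t')%N -> cell_const (K t' i) (E t i).
Proof.
move=> le_tt'; apply: (cell_const_sub (H := K t i)) => [s|].
  exact: knowledge_subset.
exact/cell_const_cond_exp/is_partition_knowledge.
Qed.

Lemma cell_const_expectation_received t t' j i :
  sched t = (j, i) -> (t < t')%N -> cell_const (K t' i) (E t j).
Proof.
move=> sched_t lt_tt'; apply: (cell_const_sub (H := K t.+1 i)) => [s|].
  exact: knowledge_subset.
by move=> s s'; rewrite /= sched_t /= eqxx !inE => /andP [_ /eqP].
Qed.

Lemma knowledge_potential_mono t t' i : (t <= t')%N -> Phi t i <= Phi t' i.
Proof.
move=> le_tt'; apply: (potential_le_refined P_ge0); try exact: is_partition_knowledge.
exact: cell_const_expectation_later.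
Qed.

Lemma knowledge_potential_received t t' j i :
  sched t = (j, i) -> (t < t')%N -> Phi t j <= Phi t' i.
Proof.
move=> sched_t lt_tt'.
apply: (potential_le_refined P_ge0); try exact: is_partition_knowledge.
exact: cell_const_expectation_received sched_t lt_tt'.
Qed.

Lemma sqnorm_expectation_later t t' i : (t <= t')%N ->
  sqnorm P (fun s => E t' i s - E t i s) = Phi t' i - Phi t i.
Proof.
move=> le_tt'; apply: (sqnorm_cond_exp_sub P_ge0); try exact: is_partition_knowledge.
exact: cell_const_expectation_later.
Qed.

Lemma sqnorm_expectation_received t t' j i :
  sched t = (j, i) -> (t < t')%N ->
  sqnorm P (fun s => E t' i s - E t j s) = Phi t' i - Phi t j.
Proof.
move=> sched_t lt_tt'.
apply: (sqnorm_cond_exp_sub P_ge0); try exact: is_partition_knowledge.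
exact: cell_const_expectation_received sched_t lt_tt'.
Qed.

End KnowledgeDynamics.

Section SpanningTreeSchedule.
Variables (n : nat) (pin pout : 'I_n.+1 -> 'I_n.+1).
Local Notation L := (size (st_block pin pout)).

Lemma st_sched_block m j : (j < L)%N ->
  st_sched pin pout (m * L + j) = nth (ord0, ord0) (st_block pin pout) j.
Proof. by move=> lt_jL; rewrite /st_sched modnMDl modn_small. Qed.

Lemma mem_nonroot v : v != ord0 -> v \in nonroot n.
Proof. by move=> v_nz; rewrite /nonroot mem_filter v_nz mem_enum. Qed.

Lemma st_block_nth (e : 'I_n.+1 * 'I_n.+1) : e \in st_block pin pout ->
  exists2 j, (j < L)%N & nth (ord0, ord0) (st_block pin pout) j = e.
Proof.
by move=> e_in; exists (index e (st_block pin pout)); rewrite ?index_mem ?nth_index.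
Qed.

Lemma in_edge_st_block v : v != ord0 -> (v, pin v) \in st_block pin pout.
Proof. by move=> v_nz; rewrite mem_cat map_f // mem_sort mem_nonroot. Qed.

Lemma out_edge_st_block v : v != ord0 -> (pout v, v) \in st_block pin pout.
Proof. by move=> v_nz; rewrite mem_cat orbC map_f // mem_sort mem_nonroot. Qed.

Lemma size_st_block : (L <= 2 * n.+1)%N.
Proof.
have : (size (nonroot n) <= n.+1)%N.
  by rewrite /nonroot size_filter (leq_trans (count_size _ _)) // size_enum_ord.
rewrite /st_block size_cat !size_map !size_sort; lia.
Qed.

End SpanningTreeSchedule.

Section SpanningTreeProtocol.
Variables (R : realFieldType) (S : finType) (P f : S -> R).
Variables (n : nat) (pin pout : 'I_n.+1 -> 'I_n.+1) (Pi0 : 'I_n.+1 -> S -> {set S}).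
Hypothesis Pi0_part : forall i, is_partition (Pi0 i).
Hypothesis P_ge0 : forall s, 0 <= P s.
Hypothesis pin_root : pin ord0 = ord0.
Hypothesis pout_root : pout ord0 = ord0.
Hypothesis pin_iter : forall v, iter n pin v = ord0.
Hypothesis pout_iter : forall v, iter n pout v = ord0.

Local Notation L := (size (st_block pin pout)).
Local Notation Phi := (knowledge_potential P f Pi0 (st_sched pin pout)).
Local Notation E := (expectation P f Pi0 (st_sched pin pout)).

Lemma knowledge_potential_block (u v : 'I_n.+1) m :
  (u, v) \in st_block pin pout -> Phi (m * L) u <= Phi (m.+1 * L) v.
Proof.
case/st_block_nth => j lt_jL block_j.
have sched_j := st_sched_block m lt_jL; rewrite block_j in sched_j.
apply: (le_trans (knowledge_potential_mono f _ Pi0_part P_ge0 u (leq_addr j (m * L)))).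
by apply: (knowledge_potential_received f Pi0_part P_ge0 sched_j); lia.
Qed.

Lemma knowledge_potential_in_edge m v : Phi (m * L) v <= Phi (m.+1 * L) (pin v).
Proof.
have [->|v_nz] := eqVneq v ord0; last exact/knowledge_potential_block/in_edge_st_block.
by rewrite pin_root; apply: knowledge_potential_mono => //; rewrite leq_mul2r leqnSn orbT.
Qed.

Lemma knowledge_potential_out_edge m w : Phi (m * L) (pout w) <= Phi (m.+1 * L) w.
Proof.
have [->|w_nz] := eqVneq w ord0; last exact/knowledge_potential_block/out_edge_st_block.
by rewrite pout_root; apply: knowledge_potential_mono => //; rewrite leq_mul2r leqnSn orbT.
Qed.

Lemma knowledge_potential_iter_in k m v :
  Phi (m * L) v <= Phi ((m + k) * L) (iter k pin v).
Proof.
elim: k m v => [|k IH] m v; first by rewrite addn0.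
apply: (le_trans (knowledge_potential_in_edge m v)).
by rewrite iterSr addnS -addSn; apply: IH.
Qed.

Lemma knowledge_potential_iter_out k m v :
  Phi (m * L) (iter k pout v) <= Phi ((m + k) * L) v.
Proof.
elim: k m v => [|k IH] m v; first by rewrite addn0.
rewrite iterS; apply: (le_trans (knowledge_potential_out_edge m _)).
by rewrite addnS -addSn; apply: IH.
Qed.

Definition round_length : nat := (2 * n).+1.
Local Notation W := round_length.

Definition root_potential k : R := Phi (k * W * L) ord0.
Definition meeting_time k : nat := ((k * W + n.+1) * L)%N.

Lemma meeting_time_le k : (meeting_time k <= k.+1 * (2 * n.+1) * (2 * n.+1))%N.
Proof.
have := size_st_block pin pout; rewrite /meeting_time /round_length => le_L.
by apply: leq_mul => //; nia.
Qed.

Lemma root_potential_le_knowledge k v t :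
  ((k * W + n) * L <= t)%N -> root_potential k <= Phi t v.
Proof.
move=> le_t; rewrite /root_potential -(pout_iter v).
apply: (le_trans (knowledge_potential_iter_out n (k * W) v)).
exact: knowledge_potential_mono.
Qed.

Lemma knowledge_le_root_potential k v t :
  (t <= (k * W + n.+1) * L)%N -> Phi t v <= root_potential k.+1.
Proof.
move=> le_t; apply: (le_trans (knowledge_potential_mono f _ Pi0_part P_ge0 v le_t)).
apply: (le_trans (knowledge_potential_iter_in n _ v)).
rewrite pin_iter /root_potential (_ : k * W + n.+1 + n = k.+1 * W)%N //.
by rewrite mulSn /round_length; lia.
Qed.

Lemma root_potential_mono k : root_potential k <= root_potential k.+1.
Proof.
by apply: knowledge_potential_mono; rewrite // leq_mul2r mulSn leq_addl orbT.
Qed.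

Lemma sqnorm_expectation_in_edge k v :
  sqnorm P (fun s => E (meeting_time k) v s - E (meeting_time k) (pin v) s)
    <= 4 * (root_potential k.+1 - root_potential k).
Proof.
set T := meeting_time k.
have [->|v_nz] := eqVneq v ord0.
  rewrite pin_root (@eq_sqnorm _ _ _ _ (fun=> 0)) ?sqnorm0 => [|s]; last by rewrite subrr.
  by have := root_potential_mono k; lra.
have [j lt_jL block_j] := st_block_nth (in_edge_st_block pin pout v_nz).
have sched_t := st_sched_block (k * W + n) lt_jL; rewrite block_j in sched_t.
set t := ((k * W + n) * L + j)%N in sched_t.
have lt_tT : (t < T)%N by rewrite /t /T /meeting_time addnS mulSn; lia.
have lo : root_potential k <= Phi t v.
  by apply: root_potential_le_knowledge; rewrite leq_addr.
have hi_v : Phi T v <= root_potential k.+1 by apply: knowledge_le_root_potential.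
have hi_pv : Phi T (pin v) <= root_potential k.+1 by apply: knowledge_le_root_potential.
apply: (le_trans (sqnorm_sub_le P_ge0 (E T v) (E t v) (E T (pin v)))).
rewrite sqnorm_expectation_later ?(ltnW lt_tT) //.
rewrite (sqnorm_expectation_received _ Pi0_part P_ge0 sched_t lt_tT).
lra.
Qed.

Lemma sqnorm_expectation_root k v :
  sqnorm P (fun s => E (meeting_time k) v s - E (meeting_time k) ord0 s)
    <= n%:R ^+ 2 * (4 * (root_potential k.+1 - root_potential k)).
Proof.
rewrite -(pin_iter v).
apply: (sqnorm_telescope P_ge0 (X := fun i => E (meeting_time k) (iter i pin v))) => i _.
by rewrite iterS; apply: sqnorm_expectation_in_edge.
Qed.

Lemma sqnorm_expectation_pair k i j :
  sqnorm P (fun s => E (meeting_time k) i s - E (meeting_time k) j s)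
    <= 16 * n%:R ^+ 2 * (root_potential k.+1 - root_potential k).
Proof.
set T := meeting_time k.
apply: (le_trans (sqnorm_sub_le P_ge0 (E T i) (E T ord0) (E T j))).
have := sqnorm_expectation_root k i; have := sqnorm_expectation_root k j; lra.
Qed.

End SpanningTreeProtocol.

(* [R] need not be archimedean, so the index of a small increment is found by
   pigeonhole on the finitely many values of [F], and only then bounded. *)
Lemma exists_small_increment (R : realFieldType) (T : finType) (F : nat -> T)
    (g : T -> R) (th : R) :
  0 < th -> exists k, g (F k.+1) - g (F k) <= th.
Proof.
move=> th_gt0; case: (boolP [exists k : 'I_#|T|.+1, g (F k.+1) - g (F k) <= th]).
  by case/existsP => k small_k; exists k.
move/existsPn => large.
have incr i j : (i < j)%N -> (j <= #|T|.+1)%N -> g (F i) < g (F j).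
  elim: j => [|j IH] // lt_ij le_jT.
  have := large (Ordinal le_jT); rewrite -ltNge /= => large_j.
  rewrite ltnS leq_eqVlt in lt_ij; case/orP: lt_ij => [/eqP ->|lt_ij]; first lra.
  by have := IH lt_ij (ltnW le_jT); lra.
have F_inj : injective (fun i : 'I_#|T|.+1 => F i).
  move=> i j /= Fij; apply/val_inj => /=.
  have [lt_ij|lt_ji|//] := ltngtP i j.
    by have := incr _ _ lt_ij (ltnW (ltn_ord j)); rewrite Fij ltxx.
  by have := incr _ _ lt_ji (ltnW (ltn_ord i)); rewrite Fij ltxx.
by have := leq_card _ F_inj; rewrite card_ord ltnn.
Qed.

Lemma first_small_increment (R : realFieldType) (T : finType) (F : nat -> T)
    (g : T -> R) (th : R) :
  0 < th -> (forall m, 0 <= g (F m) <= 1) ->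
  exists k, g (F k.+1) - g (F k) <= th /\ k%:R * th <= 1.
Proof.
move=> th_gt0 g01; set x := fun m => g (F m).
case: (ex_minnP (exists_small_increment F g th_gt0)) => k small_k k_min.
exists k; split=> //.
have grow m : (m <= k)%N -> m%:R * th <= x m - x 0%N.
  elim: m => [|m IH] le_mk; first by rewrite mul0r subrr.
  have : ~~ (x m.+1 - x m <= th) by apply/negP => /k_min; lia.
  rewrite -ltNge -natr1 mulrDl mul1r => large_m.
  by have := IH (ltnW le_mk); lra.
by have := grow k (leqnn k); have := g01 k; have := g01 0%N; rewrite /x; lra.
Qed.

Lemma prob_agree_trivial (R : realFieldType) (S : finType) (P X Y : S -> R)
    (eps delta : R) :
  is_prior P -> (forall s, 0 <= X s <= 1) -> (forall s, 0 <= Y s <= 1) ->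
  0 < delta -> 1 < delta \/ 1 <= eps ->
  1 - delta < prob P (fun s => `|X s - Y s| <= eps).
Proof.
move=> [P_ge0 P_sum1] X01 Y01 delta_gt0 [delta_gt1|eps_ge1].
  by apply: (lt_le_trans (y := 0)); [lra | apply: sumr_ge0].
rewrite /prob (eq_bigl xpredT) ?P_sum1; first lra.
move=> s /=; apply: le_trans eps_ge1.
have := X01 s; have := Y01 s; rewrite ler_norml => /andP [? ?] /andP [? ?].
by apply/andP; split; lra.
Qed.

Lemma meeting_time_bound_arith (R : realFieldType) (N k delta eps : R) :
  1 <= N -> 0 < delta <= 1 -> 0 < eps < 1 -> 0 <= k ->
  k * (delta * eps ^+ 2 / (32 * N ^+ 2)) <= 1 ->
  (k + 1) * (2 * N) * (2 * N) <= 132 * N ^+ 7 / (delta * eps) ^+ 2.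
Proof.
move=> N_ge1 /andP [delta_gt0 delta_le1] /andP [eps_gt0 eps_lt1] k_ge0 k_th.
have N2_gt0 : 0 < 32 * N ^+ 2 by rewrite mulr_gt0 // exprn_gt0; lra.
have de_gt0 : 0 < (delta * eps) ^+ 2 by rewrite exprn_gt0 // mulr_gt0.
have de_le1 : (delta * eps) ^+ 2 <= 1 by rewrite expr_le1 ?mulr_ge0 ?ltW //; nra.
have kd : k * delta * eps ^+ 2 <= 32 * N ^+ 2.
  by move: k_th; rewrite mulrA ler_pdivrMr // mul1r mulrA.
rewrite ler_pdivlMr //.
have -> : (k + 1) * (2 * N) * (2 * N) * (delta * eps) ^+ 2
    = 4 * N ^+ 2 * delta * (k * delta * eps ^+ 2) + 4 * N ^+ 2 * (delta * eps) ^+ 2.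
  by ring.
have N4 : N ^+ 4 <= N ^+ 7 by apply: ler_weXn2l.
have N27 : N ^+ 2 <= N ^+ 7 by apply: ler_weXn2l.
have term1 : 4 * N ^+ 2 * delta * (k * delta * eps ^+ 2) <= 128 * N ^+ 4.
  rewrite (_ : 128 * N ^+ 4 = 4 * N ^+ 2 * (32 * N ^+ 2)); last by ring.
  rewrite -mulrA ler_wpM2l ?mulr_ge0 ?exprn_ge0 //; try lra.
  apply: le_trans kd; rewrite -[X in _ <= X]mul1r ler_wpM2r //.
  by rewrite !mulr_ge0 ?exprn_ge0 // ltW.
have term2 : 4 * N ^+ 2 * (delta * eps) ^+ 2 <= 4 * N ^+ 2.
  by rewrite -[X in _ <= X]mulr1 ler_wpM2l // mulr_ge0 // exprn_ge0; lra.
lra.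
Qed.

Lemma pair_error_lt (R : realFieldType) (N m delta eps q : R) :
  0 <= m <= N -> 0 < delta -> 0 < eps ->
  q <= 16 * m ^+ 2 * (delta * eps ^+ 2 / (32 * N ^+ 2)) -> q / eps ^+ 2 < delta.
Proof.
move=> /andP [m_ge0 m_leN] delta_gt0 eps_gt0 q_le.
have eps2_gt0 : 0 < eps ^+ 2 by rewrite exprn_gt0.
rewrite ltr_pdivrMr //; apply: le_lt_trans q_le _.
have [->|m_gt0] := eqVneq m 0; first by rewrite expr0n mulr0 mul0r mulr_gt0.
have N_gt0 : 0 < N by rewrite (lt_le_trans _ m_leN) // lt_def m_gt0.
have m2N2 : m ^+ 2 <= N ^+ 2 by rewrite lerXn2r ?nnegrE ?(ltW N_gt0).
rewrite (_ : 16 * m ^+ 2 * _ = delta * eps ^+ 2 / 2 * (m ^+ 2 / N ^+ 2)); last first.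
  by field; rewrite gt_eqF.
have ratio_le1 : m ^+ 2 / N ^+ 2 <= 1 by rewrite ler_pdivrMr ?exprn_gt0 ?mul1r.
have half_gt0 : 0 < delta * eps ^+ 2 / 2 by rewrite divr_gt0 // mulr_gt0.
apply: (le_lt_trans (ler_piMr (ltW half_gt0) ratio_le1)).
by rewrite ltr_pdivrMr // ltr_pMr // ?mulr_gt0 //; lra.
Qed.

Theorem lemma3 (R : realFieldType) :
  exists C : R, 0 < C /\
  forall (n : nat) (e : rel 'I_n.+1) (pin pout : 'I_n.+1 -> 'I_n.+1)
         (S : finType) (P f : S -> R) (Pi0 : 'I_n.+1 -> S -> {set S})
         (eps delta : R),
    (forall u v, connect e u v) ->
    in_tree e pin -> out_tree e pout ->
    is_prior P ->
    (forall s, 0 <= f s <= 1) ->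
    (forall i, is_partition (Pi0 i)) ->
    0 < eps -> 0 < delta ->
    exists T : nat,
      T%:R <= C * (n.+1)%:R ^+ 7 / (delta * eps) ^+ 2 /\
      forall i k : 'I_n.+1,
        1 - delta <
        prob P (fun s => `|expectation P f Pi0 (st_sched pin pout) T i s
                          - expectation P f Pi0 (st_sched pin pout) T k s| <= eps).
Proof.
(* Only the tree shape of [pin] and [pout] matters, not the edges of [e]. *)
exists 132; split=> // n e pin pout S P f Pi0 eps delta _ [pin_root pin_tree]
  [pout_root pout_tree] prior_P f01 Pi0_part eps_gt0 delta_gt0.
have [P_ge0 P_sum1] := prior_P.
have pin_iter v : iter n pin v = ord0 by case: (pin_tree v).
have pout_iter v : iter n pout v = ord0 by case: (pout_tree v).
set N : R := n.+1%:R; have N_ge1 : 1 <= N by rewrite ler1n.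
have [trivial|[delta_le1 eps_lt1]] : (1 < delta \/ 1 <= eps) \/ (delta <= 1 /\ eps < 1).
  by case: (leP delta 1) (leP 1 eps) => [? [?|?]|?]; [left; right|right|left; left].
  exists 0%N; split; first by rewrite divr_ge0 ?sqr_ge0 // mulr_ge0 ?exprn_ge0 //; lra.
  by move=> i k; apply: prob_agree_trivial => // s; apply: cond_exp_in01.
set th := delta * eps ^+ 2 / (32 * N ^+ 2).
have th_gt0 : 0 < th by rewrite divr_gt0 ?mulr_gt0 ?exprn_gt0 //; lra.
set x := root_potential P f pin pout Pi0.
pose F m := [ffun s => knowledge P f Pi0 (st_sched pin pout)
                             (m * round_length n * size (st_block pin pout)) ord0 s].
have xF m : potential P f (F m) = x m by apply: eq_potential => s; rewrite ffunE.
have [k []] := @first_small_increment _ _ F (fun G => potential P f G) _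
  th_gt0 (fun m => potential_in01 P_ge0 f01 _ P_sum1).
rewrite !xF => small_k k_th.
exists (meeting_time pin pout k); split.
  apply: le_trans (meeting_time_bound_arith N_ge1 _ _ _ k_th);
    rewrite ?delta_gt0 ?eps_gt0 //.
  by move: (meeting_time_le pin pout k); rewrite -(ler_nat R) !natrM -natr1.
move=> i j; apply: lt_le_trans (chebyshev_sqnorm P_ge0 _ P_sum1 eps_gt0).
rewrite ltrD2l ltrN2.
apply: (pair_error_lt (N := N) (m := n%:R)); rewrite ?ler0n ?ler_nat //=.
apply: le_trans (sqnorm_expectation_pair f Pi0_part P_ge0 pin_root pout_root
                                        pin_iter pout_iter k i j) _.
by rewrite ler_wpM2l // mulr_ge0 // exprn_ge0.
Qed.
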